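(* Consider the Variance-shifting Procedure described in the context, with the variance metric of model (I), i.e. $\mathcal{F}(\bar f)=\mathcal{E}$ for every $\bar f$, so $\Delta(\bar f,s^2)=\sum_{ij\in\mathcal{E}}\Delta_{ij}(s^2_{ij})$. Let $\Delta^*=\min\{\Delta(\bar f,\mathbf{V}(\mathcal{A})):(\bar f,\mathcal{A})\text{ compatible}\}$. Then for an iteration $k$ in which $s^2_k$ is computed (Step 4), $\Delta(\bar f^k,s^2_k)<\Delta(\bar f^{k-1},s^2_{k-1})$ unless $\Delta(\bar f^{k-1},s^2_{k-1})=\Delta^*$.
   Context: Network (DC model): bus set $\mathcal{B}$, $n=|\mathcal{B}|$; line set $\mathcal{E}$, $m=|\mathcal{E}|$; each line $ij$ has susceptance $b_{ij}>0$ and limit $f^{\max}_{ij}>0$. $B$ is the $n\times n$ bus susceptance matrix; $\hat B$ is $B$ with last row and column removed (assumed invertible); $\breve B=\begin{pmatrix}\hat B^{-1}&0\\0&0\end{pmatrix}$ with $i$-th row $\breve B_i$; $\pi_{ij}=\breve B_i^T-\breve B_j^T$. $\mathcal{G}\subseteq\mathcal{B}$ is the set of generator buses, with limits $p_i^{\min}\le p_i^{\max}$ and costs $c_i(p)=c_{i0}p^2+c_{i1}p+c_{i2}$, $c_{i0}\ge 0$. $d\in\mathbb{R}^n$ are loads, $\mu\in\mathbb{R}^n$ mean stochastic injections, $\omega$ a zero-mean random vector with covariance $\Omega$. $\mathcal{K}$ is a given convex set of $n\times n$ participation matrices $\mathcal{A}$ (with rows $\mathcal{A}_i$). Safety parameters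 $\nu_{ij}\ge0$ (lines) and $\nu_i\ge0$ (generators) are given. For a matrix $\mathcal{A}$, $\mathbf{V}(\mathcal{A})\in\mathbb{R}^m$ has entries $\mathbf{V}(\mathcal{A})_{ij}=b_{ij}^2\pi_{ij}^T(I-\mathcal{A})\Omega(I-\mathcal{A}^T)\pi_{ij}$. Compatibility: a pair $(\bar f,\mathcal{A})$ with $\bar f\in\mathbb{R}^m$ is compatible if $\mathcal{A}\in\mathcal{K}$ and there exist $\bar p\in\mathbb{R}^n$ (with $\bar p_i=0$ for $i\notin\mathcal{G}$) and $\bar\theta\in\mathbb{R}^n$ with $B\bar\theta=\bar p+\mu-d$; $\bar f_{ij}=b_{ij}(\bar\theta_i-\bar\theta_j)$ and $|\bar f_{ij}|+\nu_{ij}\sqrt{\mathbf{V}(\mathcal{A})_{ij}}\le f^{\max}_{ij}$ for all $ij\in\mathcal{E}$; and $p_i^{\min}+\nu_i\sqrt{\mathcal{A}_i^T\Omega\mathcal{A}_i}\le\bar p_i\le p_i^{\max}-\nu_i\sqrt{\mathcal{A}_i^T\Omega\mathcal{A}_i}$ for all $i\in\mathcal{G}$. Variance metric: for each line $ij$ a convex nondecreasing function $\Delta_{ij}:[0,\infty)\to[0,\infty)$, and for each flow vector $\bar f$ a set $\mathcal{F}(\bar f)\subseteq\mathcal{E}$ depending only on $\bar f$; $\Delta(\bar f,s^2)=\sum_{ij\in\mathcal{F}(\bar f)}\Delta_{ij}(s^2_{ij})$. Subproblems. For $\hat{\mathcal{A}}\in\mathcal{K}$ and $0<\tau<1$, $\mathrm{Reroute}(\hat{\mathcal{A}},\tau)$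 is: minimize $\sum_{i\in\mathcal{G}}[c_{i0}(\bar p_i^2+\hat{\mathcal{A}}_i^T\Omega\hat{\mathcal{A}}_i)+c_{i1}\bar p_i+c_{i2}]$ over $\bar p,\bar f,\bar\theta$ subject to $B\bar\theta=\bar p+\mu-d$, $\bar f_{ij}=b_{ij}(\bar\theta_i-\bar\theta_j)$, $|\bar f_{ij}|+\nu_{ij}\sqrt{\mathbf{V}(\hat{\mathcal{A}})_{ij}}\le(1-\tau)f^{\max}_{ij}$ for all $ij\in\mathcal{E}$, and the generator constraints above with $\hat{\mathcal{A}}$. For $\bar f'$, $\mathcal{A}'$, let $\mathbf{T}(\bar f',\mathcal{A}',\tau)=\{ij\in\mathcal{E}:|\bar f'_{ij}|+\nu_{ij}\sqrt{\mathbf{V}(\mathcal{A}')_{ij}}\ge(1-\tau)f^{\max}_{ij}\}$. $\mathrm{VShift}(\bar f',\mathcal{A}',\tau)$ is: minimize $\sum_{ij\in\mathcal{F}(\bar f')}\Delta_{ij}(s_{ij}^2)$ over $s\in\mathbb{R}^m_{\ge0}$, $\mathcal{A}$ subject to $\mathcal{A}\in\mathcal{K}$, $s_{ij}^2\ge\mathbf{V}(\mathcal{A})_{ij}$ for all $ij\in\mathcal{E}$, and $|\bar f'_{ij}|+\nu_{ij}s_{ij}\le f^{\max}_{ij}$ for $ij\in\mathbf{T}(\bar f',\mathcal{A}',\tau)$. Variance-shifting Procedure. Input: a feasible solution $(\bar p^0,\bar f^0,\mathcal{A}_0)$ (so $(\bar f^0,\mathcal{A}_0)$ is compatible), the metric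 $\Delta$, $0<\tau<1$, and an iteration bound $N\ge1$; set $s^2_0=\mathbf{V}(\mathcal{A}_0)$. For $k=1,\dots,N$: (1) solve $\mathrm{Reroute}(\mathcal{A}_{k-1},\tau)$; if infeasible, stop; else let $(\bar p^k,\bar f^k,\bar\theta^k)$ be an optimal solution. (2) Solve $\mathrm{VShift}(\bar f^k,\mathcal{A}_{k-1},\tau)$, with optimal solution $(\hat s_k,\hat{\mathcal{A}}_k)$. (3) Choose the largest $\lambda\in(0,1]$ such that $(\bar f^k,(1-\lambda)\mathcal{A}_{k-1}+\lambda\hat{\mathcal{A}}_k)$ is compatible. (4) Set $\mathcal{A}_k=(1-\lambda)\mathcal{A}_{k-1}+\lambda\hat{\mathcal{A}}_k$ and $s^2_k=\mathbf{V}(\mathcal{A}_k)$. (5) If $\Delta(\bar f^k,s^2_k)\ge\Delta(\bar f^{k-1},s^2_{k-1})$, stop; otherwise reset $\tau\leftarrow\tau/2$ and continue. *)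

From HB Require Import structures.
From mathcomp Require Import all_boot all_order all_algebra.
From mathcomp Require Import reals.

Set Implicit Arguments.
Unset Strict Implicit.
Unset Printing Implicit Defensive.

Import Order.TTheory GRing.Theory Num.Theory.
Local Open Scope ring_scope.

(* DC network data. Buses are 'I_n.+1 (the last bus, ord_max, is the one whose
   row/column is removed to form \hat B); lines are 'I_m, line l goes from bus
   [fr l] to bus [tob l]. *)
Record net (R : realType) (n m : nat) := Net {
  fr : 'I_m -> 'I_n.+1;
  tob : 'I_m -> 'I_n.+1;
  susc : 'I_m -> R;
  fmax : 'I_m -> R;
  gens : {set 'I_n.+1};
  pmin : 'I_n.+1 -> R;
  pmax : 'I_n.+1 -> R;
  c0 : 'I_n.+1 -> R;
  c1 : 'I_n.+1 -> R;
  c2 : 'I_n.+1 -> R;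
  load : 'cV[R]_n.+1;
  muinj : 'cV[R]_n.+1;           (* mu, mean stochastic injections *)
  Omega : 'M[R]_n.+1;            (* covariance of omega *)
  Kset : 'M[R]_n.+1 -> Prop;     (* convex set K of participation matrices *)
  nul : 'I_m -> R;
  nug : 'I_n.+1 -> R
}.

Section Defs.
Variables (R : realType) (n m : nat) (N : net R n m).

Definition evec (i : 'I_n.+1) : 'cV[R]_n.+1 := \col_k (k == i)%:R.

Definition Bmat : 'M[R]_n.+1 :=
  \sum_(l < m) susc N l *:
     ((evec (fr N l) - evec (tob N l)) *m (evec (fr N l) - evec (tob N l))^T).

Definition Bhat : 'M[R]_n :=
  \matrix_(i, j) Bmat (lift ord_max i) (lift ord_max j).

Definition Bbreve : 'M[R]_n.+1 :=
  \matrix_(i, j) match unlift ord_max i, unlift ord_max j with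
                 | Some i', Some j' => invmx Bhat i' j'
                 | _, _ => 0
                 end.

Definition piv (l : 'I_m) : 'cV[R]_n.+1 :=
  (row (fr N l) Bbreve - row (tob N l) Bbreve)^T.

Definition Vv (A : 'M[R]_n.+1) (l : 'I_m) : R :=
  susc N l ^+ 2 *
  (((piv l)^T *m (1 - A) *m Omega N *m (1 - A^T) *m piv l) 0 0).

Definition genvar (A : 'M[R]_n.+1) (i : 'I_n.+1) : R :=
  (row i A *m Omega N *m (row i A)^T) 0 0.

Definition nongen_zero (p : 'cV[R]_n.+1) : Prop :=
  forall i, i \notin gens N -> p i 0 = 0.

Definition dc_flow (p th : 'cV[R]_n.+1) (f : 'I_m -> R) : Prop :=
  Bmat *m th = p + muinj N - load N /\
  forall l, f l = susc N l * (th (fr N l) 0 - th (tob N l) 0).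

Definition gen_ok (A : 'M[R]_n.+1) (p : 'cV[R]_n.+1) : Prop :=
  forall i, i \in gens N ->
    pmin N i + nug N i * Num.sqrt (genvar A i) <= p i 0 /\
    p i 0 <= pmax N i - nug N i * Num.sqrt (genvar A i).

Definition compatible (f : 'I_m -> R) (A : 'M[R]_n.+1) : Prop :=
  Kset N A /\
  exists p th : 'cV[R]_n.+1,
    [/\ nongen_zero p, dc_flow p th f,
        (forall l, `|f l| + nul N l * Num.sqrt (Vv A l) <= fmax N l)
      & gen_ok A p].

Definition reroute_feasible (Ah : 'M[R]_n.+1) (tau : R)
    (p : 'cV[R]_n.+1) (f : 'I_m -> R) (th : 'cV[R]_n.+1) : Prop :=
  [/\ nongen_zero p, dc_flow p th f,
      (forall l, `|f l| + nul N l * Num.sqrt (Vv Ah l) <= (1 - tau) * fmax N l)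
    & gen_ok Ah p].

Definition reroute_cost (Ah : 'M[R]_n.+1) (p : 'cV[R]_n.+1) : R :=
  \sum_(i in gens N)
     (c0 N i * (p i 0 ^+ 2 + genvar Ah i) + c1 N i * p i 0 + c2 N i).

Definition reroute_opt (Ah : 'M[R]_n.+1) (tau : R)
    (p : 'cV[R]_n.+1) (f : 'I_m -> R) (th : 'cV[R]_n.+1) : Prop :=
  reroute_feasible Ah tau p f th /\
  forall p' f' th', reroute_feasible Ah tau p' f' th' ->
    reroute_cost Ah p <= reroute_cost Ah p'.

Definition Tset (f' : 'I_m -> R) (A' : 'M[R]_n.+1) (tau : R) (l : 'I_m) : Prop :=
  (1 - tau) * fmax N l <= `|f' l| + nul N l * Num.sqrt (Vv A' l).

(* variance metric of model (I): F(f) = E for every f *)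
Definition DeltaI (Dl : 'I_m -> R -> R) (f : 'I_m -> R) (s2 : 'I_m -> R) : R :=
  \sum_(l < m) Dl l (s2 l).

Definition vshift_feasible (f' : 'I_m -> R) (A' : 'M[R]_n.+1) (tau : R)
    (s : 'I_m -> R) (A : 'M[R]_n.+1) : Prop :=
  [/\ Kset N A, (forall l, 0 <= s l), (forall l, Vv A l <= s l ^+ 2)
    & forall l, Tset f' A' tau l -> `|f' l| + nul N l * s l <= fmax N l].

Definition vshift_opt (Dl : 'I_m -> R -> R) (f' : 'I_m -> R) (A' : 'M[R]_n.+1)
    (tau : R) (s : 'I_m -> R) (A : 'M[R]_n.+1) : Prop :=
  vshift_feasible f' A' tau s A /\
  forall s' A'', vshift_feasible f' A' tau s' A'' ->
    DeltaI Dl f' (fun l => s l ^+ 2) <= DeltaI Dl f' (fun l => s' l ^+ 2).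

End Defs.

Definition convex_set (R : realType) (k : nat) (K : 'M[R]_k -> Prop) : Prop :=
  forall A B (t : R), K A -> K B -> 0 <= t <= 1 -> K ((1 - t) *: A + t *: B).

Definition convex_nonneg (R : realType) (g : R -> R) : Prop :=
  forall x y t : R, 0 <= x -> 0 <= y -> 0 <= t <= 1 ->
    g ((1 - t) * x + t * y) <= (1 - t) * g x + t * g y.

Definition nondecr_nonneg (R : realType) (g : R -> R) : Prop :=
  forall x y : R, 0 <= x -> x <= y -> g x <= g y.

From HB Require Import structures.
From mathcomp Require Import all_boot all_order all_algebra.
From mathcomp Require Import reals.
From mathcomp Require Import lra ring.

Set Implicit Arguments.
Unset Strict Implicit.
Unset Printing Implicit Defensive.

Import Order.TTheory GRing.Theory Num.Theory.
Local Open Scope ring_scope.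

(* The line variances V(A) are positive semidefinite quadratic forms in A, so
   A |-> Delta(V(A)) is convex.  Let (f^*, A^* ) attain Delta^* and put t = tau^2.
   Since sqrt V((1-t) A_{k-1} + t A^* ) <= sqrt V(A_{k-1}) + tau sqrt V(A^* ), the
   (1 - tau) margin left by Reroute on every line absorbs the extra variance,
   so this mixture is feasible for VShift.  Hence the VShift optimum has metric
   at most (1-t) Delta_{k-1} + t Delta^*, which is < Delta_{k-1} unless
   Delta_{k-1} = Delta^*; convexity along [A_{k-1}, \hat A_k] transfers the strict
   decrease to A_k for any step lambda in (0, 1]. *)

Section QuadraticForm.
Variables (R : realFieldType) (k : nat) (O : 'M[R]_k).

Definition quad_form (x : 'cV[R]_k) : R := (x^T *m O *m x) 0 0.
Definition bilin_form (x y : 'cV[R]_k) : R := (x^T *m O *m y) 0 0.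

Lemma quad_form_lincomb (a b : R) x y :
  quad_form (a *: x + b *: y) =
  a ^+ 2 * quad_form x + b ^+ 2 * quad_form y
  + a * b * (bilin_form x y + bilin_form y x).
Proof.
rewrite /quad_form /bilin_form !raddfD /= !linearZ /= !mulmxDl -!scalemxAl.
by rewrite !mxE; ring.
Qed.

Hypothesis O_psd : forall x, 0 <= quad_form x.

Lemma quad_form_convex (t : R) x y : 0 <= t <= 1 ->
  quad_form ((1 - t) *: x + t *: y) <= (1 - t) * quad_form x + t * quad_form y.
Proof.
move=> /andP[t_ge0 t_le1].
(* The convexity gap is t (1 - t) q(x - y). *)
have := O_psd (1 *: x + (-1) *: y); rewrite quad_form_lincomb => diff_ge0.
rewrite quad_form_lincomb.
have : 0 <= t * (1 - t) by rewrite mulr_ge0 // subr_ge0.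
by move/mulr_ge0/(_ diff_ge0); nra.
Qed.

End QuadraticForm.

Lemma sqrtrD_le (R : rcfType) (x y : R) : 0 <= x -> 0 <= y ->
  Num.sqrt (x + y) <= Num.sqrt x + Num.sqrt y.
Proof.
move=> x_ge0 y_ge0.
have sum_ge0 : 0 <= Num.sqrt x + Num.sqrt y by rewrite addr_ge0 ?sqrtr_ge0.
rewrite -(ger0_norm sum_ge0) -sqrtr_sqr ler_sqrt ?sqr_ge0 // sqrrD !sqr_sqrtr //.
have := mulr_ge0 (sqrtr_ge0 x) (sqrtr_ge0 y); lra.
Qed.

Lemma sqr_itv01 (R : realDomainType) (x : R) : 0 <= x <= 1 -> 0 <= x ^+ 2 <= 1.
Proof. by case/andP=> x_ge0 x_le1; rewrite sqr_ge0 exprn_ile1. Qed.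

Lemma convex_comb_lt (R : numDomainType) (t x y : R) :
  0 < t -> y < x -> (1 - t) * x + t * y < x.
Proof.
move=> t_gt0 y_lt_x.
have -> : (1 - t) * x + t * y = x - t * (x - y) by ring.
by rewrite gtrBl mulr_gt0 // subr_gt0.
Qed.

Section Network.
Variables (R : realType) (n m : nat) (N : net R n m).

(* The flow deviation on line l is b_l * (flow_sens A l)^T omega. *)
Definition flow_sens (A : 'M[R]_n.+1) (l : 'I_m) : 'cV[R]_n.+1 :=
  (1 - A^T) *m piv N l.

Lemma Vv_quad_form A l :
  Vv N A l = susc N l ^+ 2 * quad_form (Omega N) (flow_sens A l).
Proof.
rewrite /Vv /quad_form /flow_sens trmx_mul !mulmxA.
by have -> : (1 - A^T)^T = 1 - A by apply/matrixP => i j; rewrite !mxE eq_sym.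
Qed.

Lemma flow_sens_mix (t : R) A B l :
  flow_sens ((1 - t) *: A + t *: B) l =
  (1 - t) *: flow_sens A l + t *: flow_sens B l.
Proof.
rewrite /flow_sens !scalemxAl -mulmxDl; congr (_ *m _).
by apply/matrixP => i j; rewrite !mxE; ring.
Qed.

Hypothesis Omega_psd : forall x : 'cV[R]_n.+1, 0 <= quad_form (Omega N) x.

Lemma Vv_ge0 A l : 0 <= Vv N A l.
Proof. by rewrite Vv_quad_form mulr_ge0 ?sqr_ge0. Qed.

Lemma Vv_convex (t : R) A B l : 0 <= t <= 1 ->
  Vv N ((1 - t) *: A + t *: B) l <= (1 - t) * Vv N A l + t * Vv N B l.
Proof.
move=> t01; rewrite !Vv_quad_form flow_sens_mix.
rewrite (mulrCA (1 - t)) (mulrCA t) -mulrDr.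
by apply: ler_wpM2l; [exact: sqr_ge0 | exact: quad_form_convex].
Qed.

Lemma sqrt_Vv_mix_le (tau : R) A B l : 0 <= tau <= 1 ->
  Num.sqrt (Vv N ((1 - tau ^+ 2) *: A + tau ^+ 2 *: B) l)
  <= Num.sqrt (Vv N A l) + tau * Num.sqrt (Vv N B l).
Proof.
move=> tau01; have /andP[tau_ge0 _] := tau01; have t01 := sqr_itv01 tau01.
have a_ge0 := Vv_ge0 A l; have b_ge0 := Vv_ge0 B l.
have tb_ge0 : 0 <= tau ^+ 2 * Vv N B l by rewrite mulr_ge0 ?sqr_ge0.
apply: (@le_trans _ _ (Num.sqrt (Vv N A l + tau ^+ 2 * Vv N B l))).
  rewrite ler_sqrt ?addr_ge0 //; apply: le_trans (Vv_convex _ _ _ t01) _.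
  have := mulr_ge0 (sqr_ge0 tau) a_ge0; lra.
apply: le_trans (sqrtrD_le a_ge0 tb_ge0) _.
by rewrite (sqrtrM _ (sqr_ge0 tau)) sqrtr_sqr ger0_norm.
Qed.

Hypothesis nul_ge0 : forall l, 0 <= nul N l.

Lemma mix_line_limit (tau : R) (f g : 'I_m -> R) A B l : 0 <= tau <= 1 ->
  `|f l| + nul N l * Num.sqrt (Vv N A l) <= (1 - tau) * fmax N l ->
  `|g l| + nul N l * Num.sqrt (Vv N B l) <= fmax N l ->
  `|f l| + nul N l * Num.sqrt (Vv N ((1 - tau ^+ 2) *: A + tau ^+ 2 *: B) l)
  <= fmax N l.
Proof.
move=> tau01 f_margin g_limit; have /andP[tau_ge0 _] := tau01.
have := ler_wpM2l (nul_ge0 l) (sqrt_Vv_mix_le A B l tau01).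
have B_limit : nul N l * Num.sqrt (Vv N B l) <= fmax N l.
  by have := normr_ge0 (g l); lra.
have := ler_wpM2l tau_ge0 B_limit; nra.
Qed.

Hypothesis K_convex : convex_set (Kset N).

Lemma reroute_mix_vshift_feasible (tau : R) p th (f g : 'I_m -> R) A B :
  0 <= tau <= 1 -> Kset N A -> reroute_feasible N A tau p f th ->
  compatible N g B ->
  let At := (1 - tau ^+ 2) *: A + tau ^+ 2 *: B in
  vshift_feasible N f A tau (fun l => Num.sqrt (Vv N At l)) At.
Proof.
move=> tau01 KA [_ _ f_margin _] [KB [_ [_ [_ _ g_limit _]]]] At.
split=> [|l|l|l _]; last exact: mix_line_limit.
- exact: K_convex KA KB (sqr_itv01 tau01).
- exact: sqrtr_ge0.
- by rewrite sqr_sqrtr ?Vv_ge0.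
Qed.

Variable Dl : 'I_m -> R -> R.
Hypothesis Dl_convex : forall l, convex_nonneg (Dl l).
Hypothesis Dl_mono : forall l, nondecr_nonneg (Dl l).

Lemma DeltaI_le (f g u v : 'I_m -> R) :
  (forall l, 0 <= u l) -> (forall l, u l <= v l) -> DeltaI Dl f u <= DeltaI Dl g v.
Proof. by move=> u_ge0 u_le_v; apply: ler_sum => l _; apply: Dl_mono. Qed.

Lemma DeltaI_Vv_convex (f g h : 'I_m -> R) (t : R) A B : 0 <= t <= 1 ->
  DeltaI Dl f (Vv N ((1 - t) *: A + t *: B))
  <= (1 - t) * DeltaI Dl g (Vv N A) + t * DeltaI Dl h (Vv N B).
Proof.
move=> t01; rewrite /DeltaI !mulr_sumr -big_split /=; apply: ler_sum => l _.
apply: le_trans (Dl_convex l (Vv_ge0 A l) (Vv_ge0 B l) t01).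
exact: Dl_mono (Vv_ge0 _ l) (Vv_convex _ _ _ t01).
Qed.

Lemma vshift_opt_lt (tau : R) p th (f g h : 'I_m -> R) A B s Ah :
  0 < tau <= 1 -> Kset N A -> reroute_feasible N A tau p f th ->
  vshift_opt N Dl f A tau s Ah -> compatible N g B ->
  DeltaI Dl g (Vv N B) < DeltaI Dl h (Vv N A) ->
  DeltaI Dl f (Vv N Ah) < DeltaI Dl h (Vv N A).
Proof.
move=> /andP[tau_gt0 tau_le1] KA rr_feas [[_ _ Vv_le_s _] s_opt] gB_compat B_lt.
have tau01 : 0 <= tau <= 1 by rewrite (ltW tau_gt0).
have t01 := sqr_itv01 tau01.
pose At := (1 - tau ^+ 2) *: A + tau ^+ 2 *: B.
have At_feas : vshift_feasible N f A tau (fun l => Num.sqrt (Vv N At l)) At :=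
  reroute_mix_vshift_feasible tau01 KA rr_feas gB_compat.
have At_value : DeltaI Dl f (fun l => Num.sqrt (Vv N At l) ^+ 2) = DeltaI Dl f (Vv N At).
  by apply: eq_bigr => l _; rewrite sqr_sqrtr ?Vv_ge0.
have At_lt : DeltaI Dl f (Vv N At) < DeltaI Dl h (Vv N A).
  exact: le_lt_trans (DeltaI_Vv_convex f h g A B t01)
                     (convex_comb_lt (exprn_gt0 2 tau_gt0) B_lt).
apply: le_lt_trans (DeltaI_le f f (Vv_ge0 Ah) Vv_le_s) _.
by rewrite (le_lt_trans (s_opt _ _ At_feas)) // At_value.
Qed.

End Network.

Theorem lemma7 (R : realType) (n m : nat) (N : net R n m)
  (* standing assumptions on the network *)
  (Hends : forall l, fr N l != tob N l)
  (Hb : forall l, 0 < susc N l)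
  (Hfmax : forall l, 0 < fmax N l)
  (HBhat : Bhat N \in unitmx)
  (Hpm : forall i, i \in gens N -> pmin N i <= pmax N i)
  (Hc0 : forall i, i \in gens N -> 0 <= c0 N i)
  (HOsym : (Omega N)^T = Omega N)
  (HOpsd : forall x : 'cV[R]_n.+1, 0 <= (x^T *m Omega N *m x) 0 0)
  (HK : convex_set (Kset N))
  (Hnul : forall l, 0 <= nul N l)
  (Hnug : forall i, i \in gens N -> 0 <= nug N i)
  (* variance metric, model (I) *)
  (Dl : 'I_m -> R -> R)
  (HDconv : forall l, convex_nonneg (Dl l))
  (HDmono : forall l, nondecr_nonneg (Dl l))
  (HDpos : forall l x, 0 <= x -> 0 <= Dl l x)
  (* Delta^* : the minimum over compatible pairs (assumed attained) *)
  (Dstar : R)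
  (HDstar_att : exists f A, compatible N f A /\ DeltaI Dl f (Vv N A) = Dstar)
  (HDstar_low : forall f A, compatible N f A -> Dstar <= DeltaI Dl f (Vv N A))
  (* state at the start of iteration k: (f^{k-1}, A_{k-1}) compatible *)
  (fprev : 'I_m -> R) (Aprev : 'M[R]_n.+1)
  (Hcompat : compatible N fprev Aprev)
  (tau : R) (Htau : 0 < tau < 1)
  (* Step 1: Reroute(A_{k-1}, tau) feasible with optimal solution *)
  (pk : 'cV[R]_n.+1) (fk : 'I_m -> R) (thk : 'cV[R]_n.+1)
  (Hrr : reroute_opt N Aprev tau pk fk thk)
  (* Step 2: VShift(f^k, A_{k-1}, tau) optimal solution *)
  (sh : 'I_m -> R) (Ah : 'M[R]_n.+1)
  (Hvs : vshift_opt N Dl fk Aprev tau sh Ah)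
  (* Step 3: largest lambda in (0,1] giving a compatible pair *)
  (lam : R) (Hlam : 0 < lam <= 1)
  (Hlc : compatible N fk ((1 - lam) *: Aprev + lam *: Ah))
  (Hlmax : forall mu : R, 0 < mu <= 1 ->
     compatible N fk ((1 - mu) *: Aprev + mu *: Ah) -> mu <= lam) :
  (* Step 4/5 *)
  DeltaI Dl fprev (Vv N Aprev) <> Dstar ->
  DeltaI Dl fk (Vv N ((1 - lam) *: Aprev + lam *: Ah))
    < DeltaI Dl fprev (Vv N Aprev).
Proof.
move=> prev_neq_opt.
have [fs [As [opt_compat opt_value]]] := HDstar_att.
have opt_lt : DeltaI Dl fs (Vv N As) < DeltaI Dl fprev (Vv N Aprev).
  by rewrite lt_def opt_value HDstar_low // andbT; apply/eqP.
have tau01 : 0 < tau <= 1 by case/andP: Htau => -> /ltW.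
have Ah_lt := vshift_opt_lt HOpsd Hnul HK HDconv HDmono
  tau01 Hcompat.1 Hrr.1 Hvs opt_compat opt_lt.
have /andP[lam_gt0 lam_le1] := Hlam.
have lam01 : 0 <= lam <= 1 by rewrite lam_le1 andbT ltW.
exact: le_lt_trans (DeltaI_Vv_convex HOpsd HDconv HDmono fk fprev fk Aprev Ah lam01)
                   (convex_comb_lt lam_gt0 Ah_lt).
Qed.
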